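(* Let $\mathcal{Q}$ be a small involutive quantaloid. The following conditions are equivalent: (1) for every $\mathcal{Q}$-category $\mathbb{A}$, the functor $L_{\mathbb{A}}\colon(\mathbb{A}_{\mathsf s})_{\mathsf{sc}}\to(\mathbb{A}_{\mathsf{cc}})_{\mathsf s}$, $\phi\mapsto\mathbb{A}(-,S_{\mathbb{A}}-)\otimes\phi$, is an isomorphism of $\mathcal{Q}$-categories; (2) for every $\mathcal{Q}$-category $\mathbb{A}$, every $X\in\mathcal{Q}_0$ and every left adjoint presheaf $\psi\colon *_X\to\mathbb{A}$, the presheaf $\psi_{\mathsf s}\colon *_X\to\mathbb{A}_{\mathsf s}$ is a symmetric left adjoint; (3) for every left adjoint distributor $\Psi\colon\mathbb{A}\to\mathbb{B}$ between $\mathcal{Q}$-categories, the distributor $\Psi_{\mathsf s}\colon\mathbb{A}_{\mathsf s}\to\mathbb{B}_{\mathsf s}$ is a symmetric left adjoint; (4) the inclusion functor $\mathsf{SymMap}(\mathsf{SymDist}(\mathcal{Q}))\to\mathsf{Map}(\mathsf{Dist}(\mathcal{Q}))$ admits a right adjoint $G$ such that $G\circ R=R_{\mathsf s}\circ(-)_{\mathsf s}$ as functors $\mathsf{Cat}(\mathcal{Q})\to\mathsf{SymMap}(\mathsf{SymDist}(\mathcal{Q}))$, where $R\colon\mathsf{Cat}(\mathcal{Q})\to\mathsf{Map}(\mathsf{Dist}(\mathcal{Q}))$ and $R_{\mathsf s}\colon\mathsf{SymCat}(\mathcal{Q})\to\mathsf{SymMap}(\mathsf{SymDist}(\mathcal{Q}))$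 both send a functor $F\colon\mathbb{A}\to\mathbb{B}$ to $\mathbb{B}(-,F-)$, and $(-)_{\mathsf s}\colon\mathsf{Cat}(\mathcal{Q})\to\mathsf{SymCat}(\mathcal{Q})$ is symmetrisation; (5) for every object $X$ of $\mathcal{Q}$ and every family $(f_i\colon X\to X_i,\ g_i\colon X_i\to X)_{i\in I}$ of morphisms in $\mathcal{Q}$: if $f_k\circ g_j\circ f_j\le f_k$ and $g_j\circ f_j\circ g_k\le g_k$ for all $j,k\in I$, and $1_X\le\bigvee_{i\in I}g_i\circ f_i$, then $1_X\le\bigvee_{i\in I}(g_i\wedge f_i^{\mathsf o})\circ(g_i^{\mathsf o}\wedge f_i)$. Moreover, when these conditions hold, the right adjoint in (4) is the functor $\mathsf{Map}(\mathsf{Dist}(\mathcal{Q}))\to\mathsf{SymMap}(\mathsf{SymDist}(\mathcal{Q}))$ sending $\Psi\colon\mathbb{A}\to\mathbb{B}$ to $\Psi_{\mathsf s}\colon\mathbb{A}_{\mathsf s}\to\mathbb{B}_{\mathsf s}$.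
   Context: A quantaloid is a category enriched in the monoidal category $\mathsf{Sup}$ of complete lattices and supremum-preserving maps: each hom-set is a complete lattice and composition preserves arbitrary suprema in each variable. An involution on a quantaloid $\mathcal{Q}$ is an assignment $f\mapsto f^{\mathsf o}$ on morphisms, identity on objects, sending $f\colon X\to Y$ to $f^{\mathsf o}\colon Y\to X$, such that $f\le g$ implies $f^{\mathsf o}\le g^{\mathsf o}$, $(g\circ f)^{\mathsf o}=f^{\mathsf o}\circ g^{\mathsf o}$ and $f^{\mathsf{oo}}=f$. Small means a set of objects. A $\mathcal{Q}$-category $\mathbb{A}$ consists of a set $\mathbb{A}_0$ of objects, each $x$ with a type $tx\in\mathcal{Q}_0$, and hom-arrows $\mathbb{A}(y,x)\colon tx\to ty$ with $\mathbb{A}(z,y)\circ\mathbb{A}(y,x)\le\mathbb{A}(z,x)$ and $1_{tx}\le\mathbb{A}(x,x)$. A functor $F\colon\mathbb{A}\to\mathbb{B}$ is a type-preserving object map with $\mathbb{A}(y,x)\le\mathbb{B}(Fy,Fx)$; this gives the category $\mathsf{Cat}(\mathcal{Q})$. $\mathbb{A}$ is symmetric if $\mathbb{A}(x,y)=\mathbb{A}(y,x)^{\mathsf o}$ for all $x,y$; $\mathsf{SymCat}(\mathcal{Q})$ is the full subcategory of symmetric ones. The symmetrisation $\mathbb{A}_{\mathsf s}$ of $\mathbb{A}$ has the same objects and types and $\mathbb{A}_{\mathsf s}(y,x)=\mathbb{A}(y,x)\wedge\mathbb{A}(x,y)^{\mathsf o}$; a functor $F$ gives $F_{\mathsf s}\colon\mathbb{A}_{\mathsf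 s}\to\mathbb{B}_{\mathsf s}$, $a\mapsto Fa$. $S_{\mathbb{A}}\colon\mathbb{A}_{\mathsf s}\to\mathbb{A}$ is the identity on objects. A distributor $\Phi\colon\mathbb{A}\to\mathbb{B}$ consists of arrows $\Phi(y,x)\colon tx\to ty$ ($x\in\mathbb{A}_0,y\in\mathbb{B}_0$) with $\mathbb{B}(y',y)\circ\Phi(y,x)\le\Phi(y',x)$ and $\Phi(y,x)\circ\mathbb{A}(x,x')\le\Phi(y,x')$. Composition: $(\Psi\otimes\Phi)(z,x)=\bigvee_{y}\Psi(z,y)\circ\Phi(y,x)$; the identity on $\mathbb{A}$ is $\mathbb{A}$ itself; distributors are ordered elementwise, forming a quantaloid $\mathsf{Dist}(\mathcal{Q})$. $\Phi$ is a left adjoint, with right adjoint $\Phi^*\colon\mathbb{B}\to\mathbb{A}$, if $\mathbb{A}\le\Phi^*\otimes\Phi$ and $\Phi\otimes\Phi^*\le\mathbb{B}$. A functor $F\colon\mathbb{A}\to\mathbb{B}$ gives the left adjoint distributor $\mathbb{B}(-,F-)$ (elements $\mathbb{B}(y,Fx)$) with right adjoint $\mathbb{B}(F-,-)$; such distributors are called representable. In particular $\mathbb{A}(-,S_{\mathbb{A}}-)\colon\mathbb{A}_{\mathsf s}\to\mathbb{A}$ has elements $\mathbb{A}(y,x)$, with right adjoint $\mathbb{A}(S_{\mathbb{A}}-,-)$. $\mathsf{Map}(\mathsf{Dist}(\mathcal{Q}))$ is the category of $\mathcal{Q}$-categories and left adjoint distributors. For a distributor $\Phi\colon\mathbb{A}\to\mathbb{B}$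 between symmetric $\mathcal{Q}$-categories, $\Phi^{\mathsf o}\colon\mathbb{B}\to\mathbb{A}$ is the distributor $\Phi^{\mathsf o}(a,b)=\Phi(b,a)^{\mathsf o}$; $\Phi$ is a symmetric left adjoint if it is a left adjoint with right adjoint $\Phi^{\mathsf o}$. $\mathsf{SymMap}(\mathsf{SymDist}(\mathcal{Q}))$ is the category of symmetric $\mathcal{Q}$-categories and symmetric left adjoint distributors. For $X\in\mathcal{Q}_0$, $*_X$ is the one-object $\mathcal{Q}$-category with object of type $X$ and hom $1_X$ (it is symmetric). A presheaf on $\mathbb{A}$ is a distributor $\phi\colon *_X\to\mathbb{A}$. The Cauchy completion $\mathbb{A}_{\mathsf{cc}}$ has as objects the left adjoint presheaves $\phi\colon *_X\to\mathbb{A}$ (type $X$), with $\mathbb{A}_{\mathsf{cc}}(\psi,\phi)$ the unique element of $\psi^*\otimes\phi$. For symmetric $\mathbb{A}$, the symmetric completion $\mathbb{A}_{\mathsf{sc}}$ is the full subcategory of $\mathbb{A}_{\mathsf{cc}}$ on the symmetric left adjoint presheaves. For a left adjoint distributor $\Psi\colon\mathbb{A}\to\mathbb{B}$ with right adjoint $\Psi^*$, $\Psi_{\mathsf s}\colon\mathbb{A}_{\mathsf s}\to\mathbb{B}_{\mathsf s}$ is the distributor $\Psi_{\mathsf s}=(\mathbb{B}(S_{\mathbb{B}}-,-)\otimes\Psi\otimes\mathbb{A}(-,S_{\mathbb{A}}-))\wedge(\mathbb{A}(S_{\mathbb{A}}-,-)\otimes\Psi^*\otimes\mathbb{B}(-,S_{\mathbb{B}}-))^{\mathsf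 o}$, i.e. elementwise $\Psi_{\mathsf s}(b,a)=\Psi(b,a)\wedge\Psi^*(a,b)^{\mathsf o}$. *)

Set Implicit Arguments.
Record Quantaloid : Type := {
  qOb : Type;
  qHom : qOb -> qOb -> Type;
  qle : forall X Y : qOb, qHom X Y -> qHom X Y -> Prop;
  qsup : forall X Y : qOb, (qHom X Y -> Prop) -> qHom X Y;
  qcomp : forall X Y Z : qOb, qHom Y Z -> qHom X Y -> qHom X Z;
  qid : forall X : qOb, qHom X X;
  qinv : forall X Y : qOb, qHom X Y -> qHom Y X;
  qle_refl : forall X Y (f : qHom X Y), qle f f;
  qle_trans : forall X Y (f g h : qHom X Y), qle f g -> qle g h -> qle f h;
  qle_antisym : forall X Y (f g : qHom X Y), qle f g -> qle g f -> f = g;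
  qsup_ub : forall X Y (S : qHom X Y -> Prop) f, S f -> qle f (qsup S);
  qsup_least : forall X Y (S : qHom X Y -> Prop) g,
      (forall f, S f -> qle f g) -> qle (qsup S) g;
  qcomp_assoc : forall X Y Z W (h : qHom Z W) (g : qHom Y Z) (f : qHom X Y),
      qcomp h (qcomp g f) = qcomp (qcomp h g) f;
  qcomp_id_l : forall X Y (f : qHom X Y), qcomp (qid Y) f = f;
  qcomp_id_r : forall X Y (f : qHom X Y), qcomp f (qid X) = f;
  qcomp_sup_l : forall X Y Z (g : qHom Y Z) (S : qHom X Y -> Prop),
      qcomp g (qsup S) = qsup (fun h => exists f, S f /\ h = qcomp g f);
  qcomp_sup_r : forall X Y Z (S : qHom Y Z -> Prop) (f : qHom X Y),
      qcomp (qsup S) f = qsup (fun h => exists g, S g /\ h = qcomp g f);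
  qinv_mono : forall X Y (f g : qHom X Y), qle f g -> qle (qinv f) (qinv g);
  qinv_comp : forall X Y Z (g : qHom Y Z) (f : qHom X Y),
      qinv (qcomp g f) = qcomp (qinv f) (qinv g);
  qinv_invol : forall X Y (f : qHom X Y), qinv (qinv f) = f
}.

Unset Implicit Arguments.
Arguments qle {q X Y}.
Arguments qsup {q X Y}.
Arguments qcomp {q X Y Z}.
Arguments qid {q}.
Arguments qinv {q X Y}.

Section QStuff.
Context (Q : Quantaloid).

Local Notation Ob := (qOb Q).
Local Notation Hom := (qHom Q).

Definition fsup {X Y : Ob} {I : Type} (F : I -> Hom X Y) : Hom X Y :=
  qsup (fun h => exists i, h = F i).

Definition meet {X Y : Ob} (f g : Hom X Y) : Hom X Y :=
  qsup (fun h => qle h f /\ qle h g).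

Definition castdom {X X' Y : Ob} (e : X = X') (f : Hom X Y) : Hom X' Y :=
  eq_rect X (fun Z => Hom Z Y) f X' e.
Definition castcod {X Y Y' : Ob} (e : Y = Y') (f : Hom X Y) : Hom X Y' :=
  eq_rect Y (fun Z => Hom X Z) f Y' e.

(** * Q-categories (raw data; [chom A y x] is A(y,x) : tx -> ty) *)
Record QCatRaw : Type := {
  cobj : Type;
  cty : cobj -> Ob;
  chom : forall y x : cobj, Hom (cty x) (cty y)
}.

Definition isQCat (A : QCatRaw) : Prop :=
  (forall x y z : cobj A, qle (qcomp (chom A z y) (chom A y x)) (chom A z x)) /\
  (forall x : cobj A, qle (qid (cty A x)) (chom A x x)).

Definition isSym (A : QCatRaw) : Prop :=
  forall x y : cobj A, chom A x y = qinv (chom A y x).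

Definition star (X : Ob) : QCatRaw :=
  {| cobj := unit; cty := fun _ => X; chom := fun _ _ => qid X |}.

Definition sym (A : QCatRaw) : QCatRaw :=
  {| cobj := cobj A; cty := cty A;
     chom := fun y x => meet (chom A y x) (qinv (chom A x y)) |}.

Record QFun (A B : QCatRaw) : Type := {
  fmap : cobj A -> cobj B;
  fty : forall x, cty B (fmap x) = cty A x
}.
Arguments fmap {A B}.
Arguments fty {A B}.

Definition isFunctor {A B : QCatRaw} (F : QFun A B) : Prop :=
  forall y x : cobj A,
    qle (chom A y x)
        (castdom (fty F x) (castcod (fty F y) (chom B (fmap F y) (fmap F x)))).

Definition isIsoFun {A B : QCatRaw} (F : QFun A B) : Prop :=
  isFunctor F /\
  exists G : QFun B A, isFunctor G /\
    (forall x, fmap G (fmap F x) = x) /\ (forall y, fmap F (fmap G y) = y).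

Definition symF {A B : QCatRaw} (F : QFun A B) : QFun (sym A) (sym B) :=
  @Build_QFun (sym A) (sym B) (fmap F) (fty F).

(** * Distributors ([Φ y x] is Φ(y,x) : tx -> ty) *)
Definition Dist (A B : QCatRaw) : Type :=
  forall (y : cobj B) (x : cobj A), Hom (cty A x) (cty B y).

Definition isDist (A B : QCatRaw) (Phi : Dist A B) : Prop :=
  (forall y' y x, qle (qcomp (chom B y' y) (Phi y x)) (Phi y' x)) /\
  (forall y x x', qle (qcomp (Phi y x) (chom A x x')) (Phi y x')).

Definition dcomp {A B C : QCatRaw} (Psi : Dist B C) (Phi : Dist A B) : Dist A C :=
  fun z x => fsup (fun y : cobj B => qcomp (Psi z y) (Phi y x)).

Definition dle {A B : QCatRaw} (Phi Psi : Dist A B) : Prop :=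
  forall y x, qle (Phi y x) (Psi y x).

Definition deq {A B : QCatRaw} (Phi Psi : Dist A B) : Prop :=
  forall y x, Phi y x = Psi y x.

Definition did (A : QCatRaw) : Dist A A := chom A.

Definition isLeftAdjWith (A B : QCatRaw) (Phi : Dist A B) (Phis : Dist B A) : Prop :=
  isDist A B Phi /\ isDist B A Phis /\
  dle (did A) (dcomp Phis Phi) /\ dle (dcomp Phi Phis) (did B).

Definition isLeftAdj (A B : QCatRaw) (Phi : Dist A B) : Prop :=
  exists Phis, isLeftAdjWith A B Phi Phis.

Definition dinv {A B : QCatRaw} (Phi : Dist A B) : Dist B A :=
  fun a b => qinv (Phi b a).

Definition isSymLeftAdj (A B : QCatRaw) (Phi : Dist A B) : Prop :=
  isLeftAdjWith A B Phi (dinv Phi).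

(** the (unique, when it exists) right adjoint, elementwise *)
Definition radj (A B : QCatRaw) (Phi : Dist A B) : Dist B A :=
  fun a b => qsup (fun h => exists Phis, isLeftAdjWith A B Phi Phis /\ h = Phis a b).

Definition rep {A B : QCatRaw} (F : QFun A B) : Dist A B :=
  fun y x => castdom (fty F x) (chom B y (fmap F x)).

Definition SA (A : QCatRaw) : Dist (sym A) A := fun y x => chom A y x.

Definition dsymW {A B : QCatRaw} (Psi : Dist A B) (Psis : Dist B A)
  : Dist (sym A) (sym B) :=
  fun b a => meet (Psi b a) (qinv (Psis a b)).

Definition dsym (A B : QCatRaw) (Psi : Dist A B) : Dist (sym A) (sym B) :=
  dsymW Psi (radj A B Psi).

(* A_cc(ψ,φ) = the unique element of ψ* ⊗ φ (ψ* the right adjoint of ψ) *)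
Definition ccHom {A : QCatRaw} {X Y : Ob} (psi : Dist (star Y) A) (phi : Dist (star X) A)
  : Hom X Y :=
  qsup (fun h => exists psis : Dist A (star Y),
           isLeftAdjWith (star Y) A psi psis /\ h = dcomp psis phi tt tt).

Definition cc (A : QCatRaw) : QCatRaw :=
  {| cobj := {X : Ob & {phi : Dist (star X) A | isLeftAdj (star X) A phi}};
     cty := fun p => projT1 p;
     chom := fun q p => ccHom (proj1_sig (projT2 q)) (proj1_sig (projT2 p)) |}.

Definition sc (A : QCatRaw) : QCatRaw :=
  {| cobj := {X : Ob & {phi : Dist (star X) A | isSymLeftAdj (star X) A phi}};
     cty := fun p => projT1 p;
     chom := fun q p => ccHom (proj1_sig (projT2 q)) (proj1_sig (projT2 p)) |}.

(* A functor G = (G0, G1) : Map(Dist(Q)) -> SymMap(SymDist(Q)) which is right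
   adjoint to the inclusion, presented by a natural counit eps with the
   universal property.  (G0, G1 are only constrained on Q-categories and left
   adjoint distributors.) *)
Definition IsRightAdjInc (G0 : QCatRaw -> QCatRaw)
    (G1 : forall A B : QCatRaw, Dist A B -> Dist (G0 A) (G0 B)) : Prop :=
  (forall A, isQCat A -> isQCat (G0 A) /\ isSym (G0 A)) /\
  (forall A B Phi, isQCat A -> isQCat B -> isLeftAdj A B Phi ->
     isSymLeftAdj (G0 A) (G0 B) (G1 A B Phi)) /\
  (forall A, isQCat A -> deq (G1 A A (did A)) (did (G0 A))) /\
  (forall A B C (Phi : Dist A B) (Psi : Dist B C),
     isQCat A -> isQCat B -> isQCat C -> isLeftAdj A B Phi -> isLeftAdj B C Psi ->
     deq (G1 A C (dcomp Psi Phi)) (dcomp (G1 B C Psi) (G1 A B Phi))) /\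
  exists eps : forall A, Dist (G0 A) A,
    (forall A, isQCat A -> isLeftAdj (G0 A) A (eps A)) /\
    (forall A B (Phi : Dist A B), isQCat A -> isQCat B -> isLeftAdj A B Phi ->
       deq (dcomp Phi (eps A)) (dcomp (eps B) (G1 A B Phi))) /\
    (forall S A (Phi : Dist S A), isQCat S -> isSym S -> isQCat A ->
       isLeftAdj S A Phi ->
       exists Phi' : Dist S (G0 A),
         isSymLeftAdj S (G0 A) Phi' /\ deq (dcomp (eps A) Phi') Phi /\
         forall Phi'' : Dist S (G0 A),
           isSymLeftAdj S (G0 A) Phi'' -> deq (dcomp (eps A) Phi'') Phi ->
           deq Phi'' Phi').

Definition CommutesWithR (G0 : QCatRaw -> QCatRaw)
    (G1 : forall A B : QCatRaw, Dist A B -> Dist (G0 A) (G0 B)) : Prop :=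
  (forall A, isQCat A -> G0 A = sym A) /\
  (forall A B (F : QFun A B), isQCat A -> isQCat B -> isFunctor F ->
     existT (fun p : QCatRaw * QCatRaw => Dist (fst p) (snd p))
            (G0 A, G0 B) (G1 A B (rep F))
     = existT (fun p : QCatRaw * QCatRaw => Dist (fst p) (snd p))
            (sym A, sym B) (rep (symF F))).

(* (1) L_A : (A_s)_sc -> (A_cc)_s, φ ↦ A(-,S_A-) ⊗ φ, is an isomorphism of
   Q-categories: there is an isomorphism whose object map is φ ↦ A(-,S_A-)⊗φ. *)
Definition Cond1 : Prop :=
  forall A : QCatRaw, isQCat A ->
    exists L : QFun (sc (sym A)) (sym (cc A)),
      isIsoFun L /\
      forall p : cobj (sc (sym A)),
        existT (fun X => Dist (star X) A) (projT1 p) (dcomp (SA A) (proj1_sig (projT2 p)))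
        = existT (fun X => Dist (star X) A)
                 (projT1 (fmap L p : cobj (cc A)))
                 (proj1_sig (projT2 (fmap L p : cobj (cc A)))).

Definition Cond2 : Prop :=
  forall A : QCatRaw, isQCat A ->
  forall (X : Ob) (psi : Dist (star X) A) (psis : Dist A (star X)),
    isLeftAdjWith (star X) A psi psis ->
    isSymLeftAdj (star X) (sym A) (dsymW psi psis).

Definition Cond3 : Prop :=
  forall A B : QCatRaw, isQCat A -> isQCat B ->
  forall (Psi : Dist A B) (Psis : Dist B A),
    isLeftAdjWith A B Psi Psis ->
    isSymLeftAdj (sym A) (sym B) (dsymW Psi Psis).

Definition Cond4 : Prop :=
  exists (G0 : QCatRaw -> QCatRaw) (G1 : forall A B, Dist A B -> Dist (G0 A) (G0 B)),
    IsRightAdjInc G0 G1 /\ CommutesWithR G0 G1.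

Definition Cond5 : Prop :=
  forall (X : Ob) (I : Type) (Xi : I -> Ob)
         (f : forall i, Hom X (Xi i)) (g : forall i, Hom (Xi i) X),
    (forall j k, qle (qcomp (f k) (qcomp (g j) (f j))) (f k)) ->
    (forall j k, qle (qcomp (g j) (qcomp (f j) (g k))) (g k)) ->
    qle (qid X) (fsup (fun i => qcomp (g i) (f i))) ->
    qle (qid X)
        (fsup (fun i => qcomp (meet (g i) (qinv (f i))) (meet (qinv (g i)) (f i)))).

End QStuff.

(* The unit of Psi_s -| Psi_s^o at a is exactly condition (5) for the family
   (Psi(b,a), Psi*(a,b))_b, while its counit exists for every left adjoint Psi; conversely,
   (5) for a family (f_i, g_i) is condition (2) for the presheaf f on the largest Q-category
   on I making g its right adjoint.  This gives 5 => 3 => 2 => 5.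
   Under (2), phi |-> A(-,S_A-) (x) phi and psi |-> psi_s are mutually inverse functors between
   (A_s)_sc and (A_cc)_s, and any inverse of L_A exhibits psi_s as a symmetric left adjoint.
   Under (3), Psi |-> Psi_s is right adjoint to the inclusion, with counit A(-,S_A-).
   Conversely, a right adjoint G with G o R = R_s o (-)_s is pinned down on a left adjoint
   presheaf psi by factoring psi through the one-point extension of A by psi: psi is the
   restriction to A of a representable, and G is determined on both factors. *)

From Stdlib Require Import Setoid Morphisms FunctionalExtensionality ProofIrrelevance Eqdep.

Arguments qle_refl {q X Y} f.
Arguments qle_trans {q X Y f g h}.
Arguments qinv_mono {q X Y f g}.
Arguments qinv_comp {q X Y Z} g f.

Arguments fsup {Q X Y I} F.
Arguments meet {Q X Y} f g.
Arguments castdom {Q X X' Y} e f.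
Arguments castcod {Q X Y Y'} e f.
Arguments Build_QCatRaw {Q} cobj cty chom.
Arguments cobj {Q} q.
Arguments cty {Q} q _.
Arguments chom {Q} q y x.
Arguments isQCat {Q} A.
Arguments isSym {Q} A.
Arguments star {Q} X.
Arguments sym {Q} A.
Arguments QFun {Q} A B.
Arguments Build_QFun {Q A B} fmap fty.
Arguments fmap {Q A B} q _.
Arguments fty {Q A B} q x.
Arguments isFunctor {Q A B} F.
Arguments symF {Q A B} F.
Arguments Dist {Q} A B.
Arguments isDist {Q} A B Phi.
Arguments dcomp {Q A B C} Psi Phi y x.
Arguments dle {Q A B} Phi Psi.
Arguments deq {Q A B} Phi Psi.
Arguments did {Q} A.
Arguments isLeftAdjWith {Q} A B Phi Phis.
Arguments isLeftAdj {Q} A B Phi.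
Arguments dinv {Q A B} Phi.
Arguments isSymLeftAdj {Q} A B Phi.
Arguments radj {Q} A B Phi.
Arguments rep {Q A B} F.
Arguments SA {Q} A.
Arguments dsymW {Q A B} Psi Psis.
Arguments dsym {Q} A B Psi.
Arguments ccHom {Q A X Y} psi phi.
Arguments cc {Q} A.
Arguments sc {Q} A.

Section QuantaloidLemmas.
Context {Q : Quantaloid}.
Local Notation Ob := (qOb Q).
Local Notation Hom := (qHom Q).
Local Infix "<=" := qle.
Local Infix "∘" := qcomp (at level 40, left associativity).

Global Instance qle_preorder X Y : PreOrder (@qle Q X Y).
Proof. split; [exact qle_refl | intros f g h; exact qle_trans]. Qed.

Lemma qsup_pair {X Y} {f f' : Hom X Y} : f <= f' -> qsup (fun h => h = f \/ h = f') = f'.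
Proof.
  intro le_ff'. apply qle_antisym.
  - apply qsup_least; intros h [-> | ->]; [exact le_ff' | reflexivity].
  - apply qsup_ub; now right.
Qed.

Lemma qcomp_mono_l {X Y Z} (g : Hom Y Z) {f f' : Hom X Y} : f <= f' -> g ∘ f <= g ∘ f'.
Proof.
  intro le_ff'. rewrite <- (qsup_pair le_ff'), qcomp_sup_l.
  apply qsup_ub. exists f; auto.
Qed.

Lemma qcomp_mono_r {X Y Z} {g g' : Hom Y Z} (f : Hom X Y) : g <= g' -> g ∘ f <= g' ∘ f.
Proof.
  intro le_gg'. rewrite <- (qsup_pair le_gg'), qcomp_sup_r.
  apply qsup_ub. exists g; auto.
Qed.

Global Instance qcomp_mono X Y Z : Proper (qle ++> qle ++> qle) (@qcomp Q X Y Z).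
Proof.
  intros g g' Hg f f' Hf; transitivity (g' ∘ f); [apply qcomp_mono_r | apply qcomp_mono_l];
    assumption.
Qed.

Global Instance qinv_proper X Y : Proper (qle ++> qle) (@qinv Q X Y).
Proof. intros f g; exact qinv_mono. Qed.

Lemma qcomp_qsup_l_le {X Y Z} (g : Hom Y Z) (S : Hom X Y -> Prop) h :
  (forall f, S f -> g ∘ f <= h) -> g ∘ qsup S <= h.
Proof. intro H; rewrite qcomp_sup_l; apply qsup_least; intros k [f [Hf ->]]; auto. Qed.

Lemma qcomp_qsup_r_le {X Y Z} (S : Hom Y Z -> Prop) (f : Hom X Y) h :
  (forall g, S g -> g ∘ f <= h) -> qsup S ∘ f <= h.
Proof. intro H; rewrite qcomp_sup_r; apply qsup_least; intros k [g [Hg ->]]; auto. Qed.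

Lemma fsup_ub {X Y I} (F : I -> Hom X Y) i : F i <= fsup F.
Proof. apply qsup_ub; now exists i. Qed.

Lemma le_fsup {X Y I} (F : I -> Hom X Y) i h : h <= F i -> h <= fsup F.
Proof. intros ->; apply fsup_ub. Qed.

Lemma fsup_least {X Y I} (F : I -> Hom X Y) h : (forall i, F i <= h) -> fsup F <= h.
Proof. intro H; apply qsup_least; intros f [i ->]; apply H. Qed.

Lemma qcomp_fsup_l {X Y Z I} (g : Hom Y Z) (F : I -> Hom X Y) :
  g ∘ fsup F = fsup (fun i => g ∘ F i).
Proof.
  apply qle_antisym.
  - apply qcomp_qsup_l_le; intros f [i ->]; apply (fsup_ub (fun i => g ∘ F i)).
  - apply fsup_least; intro i; now rewrite <- fsup_ub.
Qed.

Lemma qcomp_fsup_r {X Y Z I} (F : I -> Hom Y Z) (f : Hom X Y) :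
  fsup F ∘ f = fsup (fun i => F i ∘ f).
Proof.
  apply qle_antisym.
  - apply qcomp_qsup_r_le; intros g [i ->]; apply (fsup_ub (fun i => F i ∘ f)).
  - apply fsup_least; intro i; now rewrite <- fsup_ub.
Qed.

Lemma qid_le_comp_r {X Y} (f : Hom X Y) (h : Hom X X) : qid X <= h -> f <= f ∘ h.
Proof. intro H; rewrite <- H; now rewrite qcomp_id_r. Qed.

Lemma qid_le_comp_l {X Y} (f : Hom X Y) (h : Hom Y Y) : qid Y <= h -> f <= h ∘ f.
Proof. intro H; rewrite <- H; now rewrite qcomp_id_l. Qed.

Lemma meet_l {X Y} (f g : Hom X Y) : meet f g <= f.
Proof. apply qsup_least; intros h [H _]; exact H. Qed.

Lemma meet_r {X Y} (f g : Hom X Y) : meet f g <= g.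
Proof. apply qsup_least; intros h [_ H]; exact H. Qed.

Lemma meet_glb {X Y} (f g h : Hom X Y) : h <= f -> h <= g -> h <= meet f g.
Proof. intros; apply qsup_ub; auto. Qed.

Lemma meetC {X Y} (f g : Hom X Y) : meet f g = meet g f.
Proof. apply qle_antisym; apply meet_glb; auto using meet_l, meet_r. Qed.

Lemma meet_id {X Y} (f : Hom X Y) : meet f f = f.
Proof. apply qle_antisym; [apply meet_l | apply meet_glb; reflexivity]. Qed.

Lemma qinv_le {X Y} (f : Hom X Y) g : f <= qinv g -> qinv f <= g.
Proof. intros ->; now rewrite qinv_invol. Qed.

Lemma le_qinv {X Y} (f : Hom X Y) g : qinv f <= g -> f <= qinv g.
Proof. intros <-; now rewrite qinv_invol. Qed.

Lemma qinv_meet {X Y} (f g : Hom X Y) : qinv (meet f g) = meet (qinv f) (qinv g).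
Proof.
  apply qle_antisym.
  - apply meet_glb; apply qinv_mono; auto using meet_l, meet_r.
  - apply le_qinv, meet_glb; apply qinv_le; auto using meet_l, meet_r.
Qed.

Lemma qinv_fsup {X Y I} (F : I -> Hom X Y) : qinv (fsup F) = fsup (fun i => qinv (F i)).
Proof.
  apply qle_antisym.
  - apply qinv_le, fsup_least; intro i; apply le_qinv, (fsup_ub (fun i => qinv (F i))).
  - apply fsup_least; intro i; apply qinv_mono, fsup_ub.
Qed.

Lemma qinv_id (X : Ob) : qinv (qid X) = qid X.
Proof.
  transitivity (qinv (qid X) ∘ qinv (qinv (qid X))).
  - now rewrite qinv_invol, qcomp_id_r.
  - now rewrite <- qinv_comp, qcomp_id_r, qinv_invol.
Qed.

Lemma castdom_comp {X X' Y Z} (e : X = X') (g : Hom Y Z) (f : Hom X Y) :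
  castdom e (g ∘ f) = g ∘ castdom e f.
Proof. now destruct e. Qed.
Lemma castcod_comp {X Y Y' Z} (e : Z = Y') (g : Hom Y Z) (f : Hom X Y) :
  castcod e (g ∘ f) = castcod e g ∘ f.
Proof. now destruct e. Qed.
Lemma castdom_castcod_comp {X Y Y' Z} (e : Y = Y') (g : Hom Y Z) (f : Hom X Y) :
  castdom e g ∘ castcod e f = g ∘ f.
Proof. now destruct e. Qed.
Lemma castdom_castcod {X X' Y Y'} (e : X = X') (e' : Y = Y') (f : Hom X Y) :
  castdom e (castcod e' f) = castcod e' (castdom e f).
Proof. now destruct e, e'. Qed.
Lemma castdom_mono {X X' Y} (e : X = X') (f g : Hom X Y) : f <= g -> castdom e f <= castdom e g.
Proof. now destruct e. Qed.
Lemma castcod_mono {X Y Y'} (e : Y = Y') (f g : Hom X Y) : f <= g -> castcod e f <= castcod e g.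
Proof. now destruct e. Qed.
Lemma qinv_castcod {X Y Y'} (e : Y = Y') (f : Hom X Y) : qinv (castcod e f) = castdom e (qinv f).
Proof. now destruct e. Qed.
Lemma castdom_meet {X X' Y} (e : X = X') (f g : Hom X Y) :
  castdom e (meet f g) = meet (castdom e f) (castdom e g).
Proof. now destruct e. Qed.

End QuantaloidLemmas.

Section Distributors.
Context {Q : Quantaloid}.
Local Notation Ob := (qOb Q).
Local Notation Hom := (qHom Q).
Local Notation Cat := (QCatRaw Q).
Local Infix "<=" := qle.
Local Infix "∘" := qcomp (at level 40, left associativity).

Lemma dist_ext {A B : Cat} (Phi Psi : Dist A B) : deq Phi Psi -> Phi = Psi.
Proof.
  intro H; apply functional_extensionality_dep; intro y.
  apply functional_extensionality_dep; intro x; apply H.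
Qed.

Global Instance dle_preorder (A B : Cat) : PreOrder (@dle Q A B).
Proof.
  split; [intros Phi y x; reflexivity | intros Phi Psi Chi H1 H2 y x; now rewrite (H1 y x)].
Qed.

Lemma dle_antisym {A B : Cat} (Phi Psi : Dist A B) : dle Phi Psi -> dle Psi Phi -> Phi = Psi.
Proof. intros H1 H2; apply dist_ext; intros y x; apply qle_antisym; auto. Qed.

Global Instance dcomp_mono (A B C : Cat) : Proper (dle ++> dle ++> dle) (@dcomp Q A B C).
Proof.
  intros Psi Psi' HPsi Phi Phi' HPhi z x; apply fsup_least; intro y.
  apply (le_fsup _ y); now rewrite (HPsi z y), (HPhi y x).
Qed.

Lemma dcomp_term_le {A B C : Cat} (Psi : Dist B C) (Phi : Dist A B) (Chi : Dist A C) z y x :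
  dle (dcomp Psi Phi) Chi -> Psi z y ∘ Phi y x <= Chi z x.
Proof. intro H; rewrite <- (H z x); apply (fsup_ub (fun y => Psi z y ∘ Phi y x)). Qed.

Lemma dcomp_assoc {A B C D : Cat} (Chi : Dist C D) (Psi : Dist B C) (Phi : Dist A B) :
  dcomp Chi (dcomp Psi Phi) = dcomp (dcomp Chi Psi) Phi.
Proof.
  apply dist_ext; intros w x; unfold dcomp; apply qle_antisym.
  - apply fsup_least; intro z; rewrite qcomp_fsup_l; apply fsup_least; intro y.
    rewrite qcomp_assoc; apply (le_fsup _ y), qcomp_mono_r.
    apply (fsup_ub (fun z => Chi w z ∘ Psi z y)).
  - apply fsup_least; intro y; rewrite qcomp_fsup_r; apply fsup_least; intro z.
    rewrite <- qcomp_assoc; apply (le_fsup _ z), qcomp_mono_l.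
    apply (fsup_ub (fun y => Psi z y ∘ Phi y x)).
Qed.

Lemma dcomp_id_l {A B : Cat} (Phi : Dist A B) :
  isQCat B -> isDist A B Phi -> dcomp (did B) Phi = Phi.
Proof.
  intros [_ HB] [HPhi _]; apply dist_ext; intros y x; apply qle_antisym.
  - apply fsup_least; intro; apply HPhi.
  - apply (le_fsup _ y), qid_le_comp_l, HB.
Qed.

Lemma dcomp_id_r {A B : Cat} (Phi : Dist A B) :
  isQCat A -> isDist A B Phi -> dcomp Phi (did A) = Phi.
Proof.
  intros [_ HA] [_ HPhi]; apply dist_ext; intros y x; apply qle_antisym.
  - apply fsup_least; intro; apply HPhi.
  - apply (le_fsup _ x), qid_le_comp_r, HA.
Qed.

Lemma did_dist (A : Cat) : isQCat A -> isDist A A (did A).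
Proof. intros [H _]; split; intros; apply H. Qed.

Lemma did_idem (A : Cat) : isQCat A -> dcomp (did A) (did A) = did A.
Proof. intro HA; apply dcomp_id_l, did_dist; exact HA. Qed.

Lemma did_left_adj (A : Cat) : isQCat A -> isLeftAdjWith A A (did A) (did A).
Proof.
  intro HA; pose proof (did_dist A HA) as D.
  split; [exact D|]; split; [exact D|]; rewrite (did_idem A HA); split; reflexivity.
Qed.

Lemma dcomp_dist {A B C : Cat} (Psi : Dist B C) (Phi : Dist A B) :
  isDist A B Phi -> isDist B C Psi -> isDist A C (dcomp Psi Phi).
Proof.
  intros [Phi_l Phi_r] [Psi_l Psi_r]; split; intros; unfold dcomp.
  - rewrite qcomp_fsup_l; apply fsup_least; intro u.
    rewrite qcomp_assoc, Psi_l; apply (fsup_ub (fun u => Psi y' u ∘ Phi u x)).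
  - rewrite qcomp_fsup_r; apply fsup_least; intro u.
    rewrite <- qcomp_assoc, Phi_r; apply (fsup_ub (fun u => Psi y u ∘ Phi u x')).
Qed.

Lemma left_inverse_eq_right_inverse {A E : Cat} (I : Dist A E) (L R : Dist E A) :
  isQCat A -> isQCat E -> isDist E A L -> isDist E A R ->
  dcomp L I = did A -> dcomp I R = did E -> R = L.
Proof.
  intros HA HE DL DR LI IR.
  rewrite <- (dcomp_id_l R HA DR), <- LI, <- dcomp_assoc, IR.
  exact (dcomp_id_r L HE DL).
Qed.

Lemma right_adj_le {A B : Cat} (Phi : Dist A B) Phis Phis' :
  isQCat A -> isQCat B -> isDist B A Phis -> isDist B A Phis' ->
  dle (did A) (dcomp Phis' Phi) -> dle (dcomp Phi Phis) (did B) -> dle Phis Phis'.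
Proof.
  intros HA HB DPhis DPhis' unit counit.
  rewrite <- (dcomp_id_l Phis HA DPhis), unit, <- dcomp_assoc, counit.
  now rewrite (dcomp_id_r Phis' HB DPhis').
Qed.

Lemma dcomp_le_insert_unit {S B C D : Cat} (Psi : Dist B D) (phi : Dist S B)
  (L : Dist B C) (R : Dist C B) :
  isQCat B -> isDist S B phi -> dle (did B) (dcomp R L) ->
  dle (dcomp Psi phi) (dcomp (dcomp Psi R) (dcomp L phi)).
Proof.
  intros HB Dphi unit.
  rewrite <- dcomp_assoc, (dcomp_assoc R L phi), <- unit.
  now rewrite (dcomp_id_l phi HB Dphi).
Qed.

Lemma right_adj_unique {A B : Cat} (Phi : Dist A B) Phis Phis' :
  isQCat A -> isQCat B -> isLeftAdjWith A B Phi Phis -> isLeftAdjWith A B Phi Phis' ->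
  Phis = Phis'.
Proof.
  intros HA HB [_ [D [U C]]] [_ [D' [U' C']]].
  apply dle_antisym; eapply right_adj_le; eauto.
Qed.

Lemma radj_eq {A B : Cat} (Phi : Dist A B) Phis :
  isQCat A -> isQCat B -> isLeftAdjWith A B Phi Phis -> radj A B Phi = Phis.
Proof.
  intros HA HB H; apply dist_ext; intros a b; apply qle_antisym.
  - apply qsup_least; intros h [P [HP ->]].
    now rewrite (right_adj_unique Phi P Phis HA HB HP H).
  - apply qsup_ub; now exists Phis.
Qed.

Lemma left_adj_comp {A B C : Cat} (Phi : Dist A B) Phis (Psi : Dist B C) Psis :
  isQCat B -> isLeftAdjWith A B Phi Phis -> isLeftAdjWith B C Psi Psis ->
  isLeftAdjWith A C (dcomp Psi Phi) (dcomp Phis Psis).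
Proof.
  intros HB [DPhi [DPhis [UPhi CPhi]]] [DPsi [DPsis [UPsi CPsi]]].
  split; [now apply dcomp_dist|]; split; [now apply dcomp_dist|]; split.
  - rewrite UPhi, <- (dcomp_id_l Phi HB DPhi) at 1.
    now rewrite UPsi, !dcomp_assoc.
  - rewrite dcomp_assoc, <- (dcomp_assoc Psi Phi Phis), CPhi.
    now rewrite (dcomp_id_r Psi HB DPsi).
Qed.

Lemma sym_qcat (A : Cat) : isQCat A -> isQCat (sym A).
Proof.
  intros [Acomp Aid]; split; intros; simpl; apply meet_glb.
  - rewrite !meet_l; apply Acomp.
  - rewrite !meet_r, <- qinv_comp; apply qinv_mono, Acomp.
  - apply Aid.
  - rewrite <- qinv_id; apply qinv_mono, Aid.
Qed.

Lemma sym_isSym (A : Cat) : isSym (sym A).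
Proof. intros x y; simpl; now rewrite qinv_meet, qinv_invol, meetC. Qed.

Lemma sym_hom_of_isSym (S : Cat) y x : isSym S -> chom (sym S) y x = chom S y x.
Proof. intro HS; simpl; now rewrite (HS x y), qinv_invol, meet_id. Qed.

Lemma star_qcat (X : Ob) : isQCat (star X).
Proof. split; intros; simpl; rewrite ?qcomp_id_l; reflexivity. Qed.

Lemma star_isSym (X : Ob) : isSym (star X).
Proof. intros x y; simpl; now rewrite qinv_id. Qed.

Lemma dinv_dist {A B : Cat} (Phi : Dist A B) :
  isSym A -> isSym B -> isDist A B Phi -> isDist B A (dinv Phi).
Proof.
  intros SymA SymB [Phi_l Phi_r]; split; intros; unfold dinv.
  - rewrite (SymA y' y), <- qinv_comp; apply qinv_mono, Phi_r.
  - rewrite (SymB x x'), <- qinv_comp; apply qinv_mono, Phi_l.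
Qed.

Lemma le_comp_unit {A B : Cat} (Phi : Dist A B) (Phis : Dist B A) a {Z : Ob}
  (h : Hom (cty A a) Z) :
  qid _ <= dcomp Phis Phi a a -> h <= fsup (fun b => h ∘ Phis a b ∘ Phi b a).
Proof.
  intro U; transitivity (h ∘ dcomp Phis Phi a a); [now apply qid_le_comp_r|].
  unfold dcomp; rewrite qcomp_fsup_l; apply fsup_least; intro b.
  rewrite qcomp_assoc; apply (fsup_ub (fun b => h ∘ Phis a b ∘ Phi b a)).
Qed.

Lemma left_adj_unit_diag {A B : Cat} (Phi : Dist A B) Phis a :
  isQCat A -> isLeftAdjWith A B Phi Phis -> qid _ <= dcomp Phis Phi a a.
Proof. intros [_ HA] [_ [_ [U _]]]; now rewrite <- (U a a). Qed.

Lemma unit_of_diag {A B : Cat} (Phi : Dist A B) Phis :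
  isDist B A Phis -> (forall a, qid _ <= dcomp Phis Phi a a) ->
  dle (did A) (dcomp Phis Phi).
Proof.
  intros [Phis_l _] U a' a; unfold did.
  rewrite (le_comp_unit Phi Phis a (chom A a' a) (U a)).
  apply fsup_least; intro b; apply (le_fsup _ b), qcomp_mono_r, Phis_l.
Qed.

End Distributors.

Section Symmetrisation.
Context {Q : Quantaloid}.
Local Notation Cat := (QCatRaw Q).

Definition SAr (A : Cat) : Dist A (sym A) := fun x y => chom A x y.

Lemma SA_left_adj (A : Cat) : isQCat A -> isLeftAdjWith (sym A) A (SA A) (SAr A).
Proof.
  intros [Acomp Aid]; unfold SA, SAr.
  split; [split|split; [split|split]]; intros; simpl.
  - apply Acomp.
  - rewrite meet_l; apply Acomp.
  - rewrite meet_l; apply Acomp.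
  - apply Acomp.
  - intros y x; unfold did; simpl.
    apply (le_fsup _ x); rewrite meet_l; apply qid_le_comp_r, Aid.
  - intros y x; apply fsup_least; intro; apply Acomp.
Qed.

Lemma dsymW_dist {A B : Cat} (Psi : Dist A B) Psis :
  isDist A B Psi -> isDist B A Psis -> isDist (sym A) (sym B) (dsymW Psi Psis).
Proof.
  intros [Psi_l Psi_r] [Psis_l Psis_r]; unfold dsymW; split; intros; simpl; apply meet_glb.
  - rewrite !meet_l; apply Psi_l.
  - rewrite !meet_r, <- qinv_comp; apply qinv_mono, Psis_r.
  - rewrite !meet_l; apply Psi_r.
  - rewrite !meet_r, <- qinv_comp; apply qinv_mono, Psis_l.
Qed.

Lemma qinv_dsymW {A B : Cat} (Psi : Dist A B) Psis b a :
  qinv (dsymW Psi Psis b a) = meet (Psis a b) (qinv (Psi b a)).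
Proof. unfold dsymW; now rewrite qinv_meet, qinv_invol, meetC. Qed.

Lemma dsymW_counit {A B : Cat} (Psi : Dist A B) Psis :
  dle (dcomp Psi Psis) (did B) ->
  dle (dcomp (dsymW Psi Psis) (dinv (dsymW Psi Psis))) (did (sym B)).
Proof.
  intros C b' b; apply fsup_least; intro a; unfold dinv.
  rewrite qinv_dsymW; unfold dsymW; simpl; apply meet_glb.
  - rewrite !meet_l; now apply dcomp_term_le.
  - rewrite !meet_r, <- qinv_comp; apply qinv_mono; now apply dcomp_term_le.
Qed.

End Symmetrisation.

Section Condition5.
Context {Q : Quantaloid}.
Local Notation Ob := (qOb Q).
Local Notation Hom := (qHom Q).
Local Notation Cat := (QCatRaw Q).
Local Infix "<=" := qle.
Local Infix "∘" := qcomp (at level 40, left associativity).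

(* Condition (5) applied to the family (Psi(b,a), Psi*(a,b)) indexed by the objects b of B. *)
Lemma dsymW_unit_diag {A B : Cat} (Psi : Dist A B) Psis :
  Cond5 Q -> isQCat A -> isLeftAdjWith A B Psi Psis ->
  forall a, qid _ <= dcomp (dinv (dsymW Psi Psis)) (dsymW Psi Psis) a a.
Proof.
  intros H5 HA HPsi a; pose proof HPsi as [[Psi_l _] [[_ Psis_r] [_ C]]].
  replace (dcomp _ _ a a)
    with (fsup (fun b => meet (Psis a b) (qinv (Psi b a)) ∘ meet (qinv (Psis a b)) (Psi b a))).
  2:{ unfold dcomp, dinv; f_equal; extensionality b.
      now rewrite qinv_dsymW; unfold dsymW; rewrite (meetC (Psi b a)). }
  apply (H5 (cty A a) (cobj B) (cty B) (fun b => Psi b a) (fun b => Psis a b)).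
  - intros j k; rewrite qcomp_assoc, (dcomp_term_le _ _ _ _ _ _ C); apply Psi_l.
  - intros j k; rewrite (dcomp_term_le _ _ _ _ _ _ C); apply Psis_r.
  - exact (left_adj_unit_diag Psi Psis a HA HPsi).
Qed.

Lemma cond5_cond3 : Cond5 Q -> Cond3 Q.
Proof.
  intros H5 A B HA HB Psi Psis HPsi; pose proof HPsi as [DPsi [DPsis [_ C]]].
  assert (Ds : isDist (sym A) (sym B) (dsymW Psi Psis)) by now apply dsymW_dist.
  assert (Dsinv : isDist (sym B) (sym A) (dinv (dsymW Psi Psis)))
    by (apply dinv_dist; auto using sym_isSym).
  split; [exact Ds|]; split; [exact Dsinv|]; split.
  - apply unit_of_diag; [exact Dsinv|]; now apply dsymW_unit_diag.
  - now apply dsymW_counit.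
Qed.

Lemma left_adj_of_sym (S B : Cat) (Phi : Dist S B) Phis :
  isSym S -> isLeftAdjWith (sym S) B Phi Phis -> isLeftAdjWith S B Phi Phis.
Proof.
  intros HS [[Phi_l Phi_r] [[Phis_l Phis_r] [U C]]].
  split; [split|split; [split|split]]; auto; intros.
  - rewrite <- (sym_hom_of_isSym S _ _ HS); apply Phi_r.
  - rewrite <- (sym_hom_of_isSym S _ _ HS); apply Phis_l.
  - intros y x; unfold did; rewrite <- (sym_hom_of_isSym S _ _ HS); apply U.
Qed.

Lemma cond3_cond2 : Cond3 Q -> Cond2 Q.
Proof.
  intros H3 A HA X psi psis Hpsi.
  apply left_adj_of_sym; [apply star_isSym|].
  exact (H3 (star X) A (star_qcat X) HA psi psis Hpsi).
Qed.

Section FamilyCat.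
Context (X : Ob) (I : Type) (Xi : I -> Ob).
Context (f : forall i, Hom X (Xi i)) (g : forall i, Hom (Xi i) X).

(* The largest Q-category structure on I for which f is a presheaf and g a copresheaf. *)
Definition family_cat : Cat :=
  Build_QCatRaw I Xi (fun j k => qsup (fun h => h ∘ f k <= f j /\ g j ∘ h <= g k)).

Definition family_presheaf : Dist (star X) family_cat := fun j _ => f j.
Definition family_copresheaf : Dist family_cat (star X) := fun _ k => g k.

Lemma family_cat_qcat : isQCat family_cat.
Proof.
  split; simpl.
  - intros i j k; apply qcomp_qsup_r_le; intros h1 [hf1 hg1].
    apply qcomp_qsup_l_le; intros h2 [hf2 hg2]; apply qsup_ub; split.
    + now rewrite <- qcomp_assoc, hf2.
    + now rewrite qcomp_assoc, hg1.
  - intro i; apply qsup_ub; now rewrite qcomp_id_l, qcomp_id_r.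
Qed.

Lemma family_presheaf_left_adj :
  (forall j k, f k ∘ (g j ∘ f j) <= f k) ->
  (forall j k, g j ∘ (f j ∘ g k) <= g k) ->
  qid X <= fsup (fun i => g i ∘ f i) ->
  isLeftAdjWith (star X) family_cat family_presheaf family_copresheaf.
Proof.
  intros fgf gfg unit; unfold family_presheaf, family_copresheaf.
  split; [split|split; [split|split]]; simpl; intros.
  - apply qcomp_qsup_r_le; now intros h [hf _].
  - now rewrite qcomp_id_r.
  - now rewrite qcomp_id_l.
  - apply qcomp_qsup_l_le; now intros h [_ hg].
  - intros [] []; exact unit.
  - intros j k; apply fsup_least; intros []; apply qsup_ub; split.
    + rewrite <- qcomp_assoc; apply fgf.
    + apply gfg.
Qed.

End FamilyCat.

Lemma cond2_cond5 : Cond2 Q -> Cond5 Q.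
Proof.
  intros H2 X I Xi f g fgf gfg unit.
  pose proof (family_presheaf_left_adj X I Xi f g fgf gfg unit) as Hpsi.
  destruct (H2 _ (family_cat_qcat X I Xi f g) X _ _ Hpsi) as [_ [_ [Us _]]].
  rewrite (Us tt tt); apply fsup_least; intro i; apply (le_fsup _ i).
  unfold dinv, dsymW, family_presheaf, family_copresheaf.
  now rewrite qinv_meet, qinv_invol, (meetC (qinv (f i))), (meetC (f i)).
Qed.

End Condition5.

Section SymmetricCompletion.
Context {Q : Quantaloid}.
Local Notation Cat := (QCatRaw Q).
Local Infix "<=" := qle.
Local Infix "∘" := qcomp (at level 40, left associativity).

Lemma SA_dsymW {S A : Cat} (Psi : Dist S A) Psis :
  isDist S A Psi -> dle (dcomp Psi Psis) (did A) ->
  (forall s, qid _ <= dcomp (dinv (dsymW Psi Psis)) (dsymW Psi Psis) s s) ->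
  dcomp (SA A) (dsymW Psi Psis) = Psi.
Proof.
  intros [Psi_l _] C U; apply dist_ext; intros a s; apply qle_antisym.
  - apply fsup_least; intro a'; unfold SA, dsymW; rewrite meet_l; apply Psi_l.
  - rewrite (le_comp_unit _ _ s (Psi a s) (U s)); apply fsup_least; intro c.
    apply (le_fsup _ c), qcomp_mono_r; unfold dinv, SA.
    rewrite qinv_dsymW, meet_l; now apply dcomp_term_le.
Qed.

Lemma dsymW_SA_comp {S A : Cat} (phi : Dist S (sym A)) :
  isQCat A -> isDist S (sym A) phi -> dle (dcomp phi (dinv phi)) (did (sym A)) ->
  (forall s, qid _ <= dcomp (dinv phi) phi s s) ->
  dsymW (dcomp (SA A) phi) (dcomp (dinv phi) (SAr A)) = phi.
Proof.
  intros [Acomp Aid] [phi_l _] C U.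
  assert (counit : forall c c' s, phi c s ∘ qinv (phi c' s) <= chom A c c').
  { intros c c' s; transitivity (chom (sym A) c c'); [exact (dcomp_term_le _ _ _ c s c' C)|].
    apply meet_l. }
  apply dist_ext; intros a s; unfold dsymW, dcomp, SA, SAr, dinv; apply qle_antisym.
  - set (x := meet _ _); rewrite (le_comp_unit _ _ s x (U s)); apply fsup_least; intro c.
    rewrite <- (phi_l a c s); apply qcomp_mono_r; unfold dinv; simpl; apply meet_glb.
    + unfold x; rewrite meet_l, qcomp_fsup_r; apply fsup_least; intro a'.
      rewrite <- qcomp_assoc; etransitivity; [apply (qcomp_mono_l _ (counit a' c s)) | apply Acomp].
    + unfold x; rewrite meet_r, <- qinv_comp; apply qinv_mono.
      rewrite qcomp_fsup_l; apply fsup_least; intro c'.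
      rewrite qcomp_assoc; etransitivity; [apply (qcomp_mono_r _ (counit c c' s)) | apply Acomp].
  - apply meet_glb.
    + apply (le_fsup _ a), qid_le_comp_l, Aid.
    + apply le_qinv, (le_fsup _ a), qid_le_comp_r, Aid.
Qed.

Lemma dsym_eq_dsymW {S B : Cat} (Psi : Dist S B) Psis :
  isQCat S -> isQCat B -> isLeftAdjWith S B Psi Psis -> dsym S B Psi = dsymW Psi Psis.
Proof. intros HS HB H; unfold dsym; now rewrite (radj_eq Psi Psis HS HB H). Qed.

End SymmetricCompletion.

Section Condition1.
Context {Q : Quantaloid}.
Local Notation Ob := (qOb Q).
Local Notation Cat := (QCatRaw Q).
Local Infix "<=" := qle.

Lemma ccHom_right_adj {A : Cat} {X Y : Ob} (psi : Dist (star Y) A) psis (phi : Dist (star X) A) :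
  isQCat A -> isLeftAdjWith (star Y) A psi psis -> ccHom psi phi = dcomp psis phi tt tt.
Proof.
  intros HA Hpsi; unfold ccHom; apply qle_antisym.
  - apply qsup_least; intros h [p [Hp ->]].
    now rewrite (right_adj_unique psi p psis (star_qcat Y) HA Hp Hpsi).
  - apply qsup_ub; now exists psis.
Qed.

Lemma qinv_dcomp_dinv {A : Cat} {X Y : Ob} (phi : Dist (star Y) A) (phi' : Dist (star X) A) :
  qinv (dcomp (dinv phi) phi' tt tt) = dcomp (dinv phi') phi tt tt.
Proof.
  unfold dcomp, dinv; rewrite qinv_fsup; f_equal; extensionality a.
  now rewrite qinv_comp, qinv_invol.
Qed.

Lemma presheaf_obj_eq {A : Cat} (P : forall X : Ob, Dist (star X) A -> Prop) (X : Ob)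
  (phi phi' : Dist (star X) A) (p : P X phi) (p' : P X phi') :
  phi = phi' ->
  existT (fun X => {phi : Dist (star X) A | P X phi}) X (exist _ phi p)
  = existT (fun X => {phi : Dist (star X) A | P X phi}) X (exist _ phi' p').
Proof. intros ->; do 2 f_equal; apply proof_irrelevance. Qed.

Lemma SA_comp_left_adj {S A : Cat} (phi : Dist S (sym A)) :
  isQCat A -> isSymLeftAdj S (sym A) phi ->
  isLeftAdjWith S A (dcomp (SA A) phi) (dcomp (dinv phi) (SAr A)).
Proof. intros HA Hphi; eapply left_adj_comp; eauto using sym_qcat, SA_left_adj. Qed.

Lemma dsymW_SA_comp_sym_left_adj {S A : Cat} (phi : Dist S (sym A)) :
  isQCat S -> isQCat A -> isSymLeftAdj S (sym A) phi ->
  dsymW (dcomp (SA A) phi) (dcomp (dinv phi) (SAr A)) = phi.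
Proof.
  intros HS HA Hphi; pose proof Hphi as [Dphi [_ [_ C]]].
  apply dsymW_SA_comp; auto; intro s; now apply left_adj_unit_diag.
Qed.

Lemma cond1_cond2 : Cond1 Q -> Cond2 Q.
Proof.
  intros H1 A HA X psi psis Hpsi.
  destruct (H1 A HA) as [L [[_ [G [_ [_ LG]]]] L_obj]].
  set (q := existT (fun X => {phi : Dist (star X) A | isLeftAdj (star X) A phi}) X
              (exist _ psi (ex_intro _ psis Hpsi)) : cobj (cc A)).
  pose proof (L_obj (fmap G q)) as E; rewrite (LG q) in E; simpl in E.
  destruct (fmap G q) as [X' [phi Hphi]]; simpl in E.
  assert (X' = X) as -> by exact (f_equal (@projT1 _ _) E).
  apply inj_pair2 in E; clear q; rewrite <- E in Hpsi |- *.
  rewrite (right_adj_unique _ _ _ (star_qcat X) HA Hpsi (SA_comp_left_adj phi HA Hphi)).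
  now rewrite dsymW_SA_comp_sym_left_adj by auto using star_qcat.
Qed.

Lemma sym_cc_hom_le_dsymW {A : Cat} {X Y : Ob} (psi : Dist (star X) A) psis
  (psi' : Dist (star Y) A) psis' :
  isLeftAdjWith (star X) A psi psis -> isLeftAdjWith (star Y) A psi' psis' ->
  qid X <= dcomp (dinv (dsymW psi psis)) (dsymW psi psis) tt tt ->
  meet (dcomp psis' psi tt tt) (qinv (dcomp psis psi' tt tt))
  <= dcomp (dinv (dsymW psi' psis')) (dsymW psi psis) tt tt.
Proof.
  intros [_ [_ [_ C]]] [[psi'_l _] [[_ psis'_r] _]] U.
  set (y := meet _ _); rewrite (le_comp_unit (dsymW psi psis) _ tt y U); apply fsup_least; intro c.
  apply (le_fsup _ c), qcomp_mono_r; unfold dinv; rewrite !qinv_dsymW; apply meet_glb.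
  - unfold y; rewrite meet_l, meet_l; unfold dcomp; rewrite qcomp_fsup_r; apply fsup_least; intro a.
    rewrite <- qcomp_assoc, <- (psis'_r tt a c); apply qcomp_mono_l.
    now apply dcomp_term_le.
  - unfold y; rewrite meet_r, meet_r, <- qinv_comp; apply qinv_mono.
    unfold dcomp; rewrite qcomp_fsup_l; apply fsup_least; intro a.
    rewrite qcomp_assoc, <- (psi'_l c a tt); apply qcomp_mono_r.
    now apply dcomp_term_le.
Qed.

Section Cond2Cond1.
Context (H2 : Cond2 Q) (A : Cat) (HA : isQCat A).

Lemma SA_comp_presheaf_left_adj X (phi : Dist (star X) (sym A)) :
  isSymLeftAdj (star X) (sym A) phi -> isLeftAdj (star X) A (dcomp (SA A) phi).
Proof. intro H; eexists; now apply SA_comp_left_adj. Qed.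

Lemma dsym_presheaf_sym_left_adj X (psi : Dist (star X) A) :
  isLeftAdj (star X) A psi -> isSymLeftAdj (star X) (sym A) (dsym (star X) A psi).
Proof.
  intros [psis H]; rewrite (dsym_eq_dsymW psi psis (star_qcat X) HA H).
  exact (H2 A HA X psi psis H).
Qed.

Definition L_obj (p : cobj (sc (sym A))) : cobj (sym (cc A)) :=
  existT _ (projT1 p) (exist _ (dcomp (SA A) (proj1_sig (projT2 p)))
                         (SA_comp_presheaf_left_adj _ _ (proj2_sig (projT2 p)))).
Definition G_obj (q : cobj (sym (cc A))) : cobj (sc (sym A)) :=
  existT _ (projT1 q) (exist _ (dsym (star (projT1 q)) A (proj1_sig (projT2 q)))
                         (dsym_presheaf_sym_left_adj _ _ (proj2_sig (projT2 q)))).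
Definition LA : QFun (sc (sym A)) (sym (cc A)) := Build_QFun L_obj (fun p => eq_refl).
Definition GA : QFun (sym (cc A)) (sc (sym A)) := Build_QFun G_obj (fun q => eq_refl).

Lemma LA_functor : isFunctor LA.
Proof.
  pose proof (sym_qcat A HA) as HsA; pose proof (SA_left_adj A HA) as [_ [_ [unit _]]].
  intros [Y [phiy Hy]] [X [phix Hx]]; simpl.
  rewrite (ccHom_right_adj phiy (dinv phiy) phix HsA Hy).
  rewrite (ccHom_right_adj _ _ _ HA (SA_comp_left_adj phiy HA Hy)).
  rewrite (ccHom_right_adj _ _ _ HA (SA_comp_left_adj phix HA Hx)).
  apply meet_glb.
  - apply (dcomp_le_insert_unit (dinv phiy) phix _ _ HsA (proj1 Hx) unit tt tt).
  - rewrite <- qinv_dcomp_dinv; apply qinv_mono.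
    apply (dcomp_le_insert_unit (dinv phix) phiy _ _ HsA (proj1 Hy) unit tt tt).
Qed.

Lemma GA_functor : isFunctor GA.
Proof.
  intros [Y [psiy [psiys Hy]]] [X [psix [psixs Hx]]]; simpl.
  pose proof (dsym_presheaf_sym_left_adj Y psiy (ex_intro _ psiys Hy)) as Sy.
  pose proof (dsym_presheaf_sym_left_adj X psix (ex_intro _ psixs Hx)) as Sx.
  rewrite (dsym_eq_dsymW psix psixs (star_qcat X) HA Hx) in *.
  rewrite (dsym_eq_dsymW psiy psiys (star_qcat Y) HA Hy) in *.
  rewrite (ccHom_right_adj _ _ psix HA Hy), (ccHom_right_adj _ _ psiy HA Hx).
  rewrite (ccHom_right_adj _ _ _ (sym_qcat A HA) Sy).
  apply sym_cc_hom_le_dsymW; auto.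
  exact (left_adj_unit_diag (A := star X) _ _ tt (star_qcat X) Sx).
Qed.

Lemma GA_LA p : fmap GA (fmap LA p) = p.
Proof.
  destruct p as [X [phi Hphi]].
  apply (presheaf_obj_eq (fun X phi => isSymLeftAdj (star X) (sym A) phi)); simpl.
  rewrite (dsym_eq_dsymW _ _ (star_qcat X) HA (SA_comp_left_adj phi HA Hphi)).
  apply dsymW_SA_comp_sym_left_adj; auto using star_qcat.
Qed.

Lemma LA_GA q : fmap LA (fmap GA q) = q.
Proof.
  destruct q as [X [psi [psis H]]].
  apply (presheaf_obj_eq (fun X phi => isLeftAdj (star X) A phi)); simpl.
  pose proof (dsym_presheaf_sym_left_adj X psi (ex_intro _ psis H)) as Hs.
  rewrite (dsym_eq_dsymW psi psis (star_qcat X) HA H) in *.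
  apply SA_dsymW; try apply H.
  intros []; exact (left_adj_unit_diag (A := star X) _ _ tt (star_qcat X) Hs).
Qed.

End Cond2Cond1.

Lemma cond2_cond1 : Cond2 Q -> Cond1 Q.
Proof.
  intros H2 A HA; exists (LA A HA); split; [|reflexivity].
  split; [apply LA_functor|]; exists (GA H2 A HA).
  split; [apply GA_functor|]; split; [apply GA_LA | apply LA_GA].
Qed.

End Condition1.

Section RightAdjoint.
Context {Q : Quantaloid}.
Local Notation Cat := (QCatRaw Q).
Local Infix "<=" := qle.
Local Infix "∘" := qcomp (at level 40, left associativity).

Definition repR {A B : Cat} (F : QFun A B) : Dist B A :=
  fun x y => castcod (fty F x) (chom B (fmap F x) y).

Lemma rep_left_adj {A B : Cat} (F : QFun A B) :
  isQCat B -> isFunctor F -> isLeftAdjWith A B (rep F) (repR F).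
Proof.
  intros [Bcomp Bid] HF; unfold rep, repR.
  split; [split|split; [split|split]]; intros.
  - rewrite <- castdom_comp; apply castdom_mono, Bcomp.
  - rewrite HF, <- castdom_comp, castdom_castcod_comp; apply castdom_mono, Bcomp.
  - rewrite HF, castdom_castcod, <- castcod_comp, castdom_castcod_comp.
    apply castcod_mono, Bcomp.
  - rewrite <- castcod_comp; apply castcod_mono, Bcomp.
  - intros x' x; apply (le_fsup _ (fmap F x)).
    rewrite <- castdom_comp, <- castcod_comp, HF.
    apply castdom_mono, castcod_mono, qid_le_comp_r, Bid.
  - intros y y'; apply fsup_least; intro x; rewrite castdom_castcod_comp; apply Bcomp.
Qed.

Lemma dsymW_rep {A B : Cat} (F : QFun A B) : dsymW (rep F) (repR F) = rep (symF F).
Proof.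
  apply dist_ext; intros b a; unfold dsymW, rep, repR; simpl.
  now rewrite qinv_castcod, castdom_meet.
Qed.

Lemma dsymW_dcomp {A B C : Cat} (Phi : Dist A B) Phis (Psi : Dist B C) Psis :
  isLeftAdjWith A B Phi Phis -> isLeftAdjWith B C Psi Psis ->
  (forall a, qid _ <= dcomp (dinv (dsymW Phi Phis)) (dsymW Phi Phis) a a) ->
  dsymW (dcomp Psi Phi) (dcomp Phis Psis) = dcomp (dsymW Psi Psis) (dsymW Phi Phis).
Proof.
  intros [_ [_ [_ CPhi]]] [[_ Psi_r] [[Psis_l _] _]] U.
  apply dist_ext; intros c a; apply qle_antisym.
  - set (x := dsymW _ _ c a); rewrite (le_comp_unit _ _ a x (U a)).
    apply fsup_least; intro b; apply (le_fsup _ b), qcomp_mono_r.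
    unfold x, dinv, dsymW at 1 3; rewrite qinv_dsymW; apply meet_glb.
    + rewrite meet_l, meet_l; unfold dcomp; rewrite qcomp_fsup_r; apply fsup_least; intro b'.
      rewrite <- qcomp_assoc, <- (Psi_r c b' b); apply qcomp_mono_l.
      now apply dcomp_term_le.
    + rewrite meet_r, meet_r, <- qinv_comp; apply qinv_mono.
      unfold dcomp; rewrite qcomp_fsup_l; apply fsup_least; intro b'.
      rewrite qcomp_assoc, <- (Psis_l b b' c); apply qcomp_mono_r.
      now apply dcomp_term_le.
  - apply fsup_least; intro b; unfold dsymW; apply meet_glb.
    + rewrite !meet_l; apply (fsup_ub (fun u => Psi c u ∘ Phi u a)).
    + rewrite !meet_r, <- qinv_comp; apply qinv_mono.
      apply (fsup_ub (fun u => Phis a u ∘ Psis u c)).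
Qed.

Lemma commutes_with_R : CommutesWithR Q (@sym Q) (@dsym Q).
Proof.
  split; [reflexivity|]; intros A B F HA HB HF; f_equal.
  rewrite (dsym_eq_dsymW _ _ HA HB (rep_left_adj F HB HF)); apply dsymW_rep.
Qed.

Section Cond3.
Hypothesis H3 : Cond3 Q.

Lemma dsym_sym_left_adj (A B : Cat) (Phi : Dist A B) :
  isQCat A -> isQCat B -> isLeftAdj A B Phi -> isSymLeftAdj (sym A) (sym B) (dsym A B Phi).
Proof. intros HA HB [Phis H]; rewrite (dsym_eq_dsymW _ _ HA HB H); now apply H3. Qed.

Lemma dsym_dcomp {A B C : Cat} (Phi : Dist A B) (Psi : Dist B C) :
  isQCat A -> isQCat B -> isQCat C -> isLeftAdj A B Phi -> isLeftAdj B C Psi ->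
  dsym A C (dcomp Psi Phi) = dcomp (dsym B C Psi) (dsym A B Phi).
Proof.
  intros HA HB HC [Phis HPhi] [Psis HPsi].
  rewrite (dsym_eq_dsymW _ _ HA HC (left_adj_comp _ _ _ _ HB HPhi HPsi)),
          (dsym_eq_dsymW _ _ HA HB HPhi), (dsym_eq_dsymW _ _ HB HC HPsi).
  apply dsymW_dcomp; auto.
  intro a; apply left_adj_unit_diag; [now apply sym_qcat | now apply H3].
Qed.

Lemma SA_dsym {A B : Cat} (Phi : Dist A B) :
  isQCat A -> isQCat B -> isLeftAdj A B Phi -> dcomp (SA B) (dsym A B Phi) = Phi.
Proof.
  intros HA HB [Phis H]; rewrite (dsym_eq_dsymW _ _ HA HB H).
  apply SA_dsymW; try apply H.
  intro a; apply left_adj_unit_diag; [now apply sym_qcat | now apply H3].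
Qed.

Lemma sym_left_adj_lift (S A : Cat) (Phi : Dist S A) :
  isQCat S -> isSym S -> isQCat A -> isLeftAdj S A Phi ->
  exists Phi' : Dist S (sym A),
    isSymLeftAdj S (sym A) Phi' /\ deq (dcomp (SA A) Phi') Phi /\
    forall Phi'' : Dist S (sym A),
      isSymLeftAdj S (sym A) Phi'' -> deq (dcomp (SA A) Phi'') Phi -> deq Phi'' Phi'.
Proof.
  intros HS SymS HA [Phis H].
  pose proof (left_adj_of_sym S (sym A) _ _ SymS (H3 S A HS HA Phi Phis H)) as Hs.
  exists (dsymW Phi Phis); split; [exact Hs|]; split.
  - assert (E : dcomp (SA A) (dsymW Phi Phis) = Phi).
    { apply SA_dsymW; try apply H; intro s; exact (left_adj_unit_diag (A := S) _ _ s HS Hs). }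
    intros y x; exact (f_equal (fun F : Dist (sym S) A => F y x) E).
  - intros Phi'' Hs'' E y x; apply dist_ext in E; subst Phi.
    rewrite (right_adj_unique _ _ _ HS HA H (SA_comp_left_adj Phi'' HA Hs'')).
    now rewrite dsymW_SA_comp_sym_left_adj.
Qed.

Lemma cond3_right_adjoint : IsRightAdjInc Q (@sym Q) (@dsym Q).
Proof.
  split; [intros A HA; split; [now apply sym_qcat | apply sym_isSym]|].
  split; [exact dsym_sym_left_adj|].
  split; [intros A HA; rewrite (dsym_eq_dsymW _ _ HA HA (did_left_adj A HA)); now intros y x|].
  split; [intros; now rewrite dsym_dcomp|].
  exists SA; split; [|split].
  - intros A HA; eexists; now apply SA_left_adj.
  - intros A B Phi HA HB [Phis HPhi] y x.
    rewrite SA_dsym by (auto; now exists Phis).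
    exact (f_equal (fun F : Dist A B => F y x) (dcomp_id_r Phi HA (proj1 HPhi))).
  - exact sym_left_adj_lift.
Qed.

End Cond3.

Lemma cond3_cond4 : Cond3 Q -> Cond4 Q.
Proof.
  intro H3; exists (@sym Q), (@dsym Q).
  split; [now apply cond3_right_adjoint | apply commutes_with_R].
Qed.

End RightAdjoint.

Section Condition4.
Context {Q : Quantaloid}.
Local Notation Ob := (qOb Q).
Local Notation Hom := (qHom Q).
Local Notation Cat := (QCatRaw Q).
Local Infix "<=" := qle.
Local Infix "∘" := qcomp (at level 40, left associativity).

Section Extension.
Context (A : Cat) (HA : isQCat A) (X : Ob) (psi : Dist (star X) A) (psis : Dist A (star X))
        (Hpsi : isLeftAdjWith (star X) A psi psis).

(* A with one new object [None] of type X, connected to A by psi and psis; psi is then the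
   restriction to A of the representable at [None]. *)
Definition ext_ty (o : option (cobj A)) : Ob :=
  match o with Some a => cty A a | None => X end.

Definition ext_hom (y x : option (cobj A)) : Hom (ext_ty x) (ext_ty y) :=
  match y, x return Hom (ext_ty x) (ext_ty y) with
  | Some b, Some a => chom A b a
  | Some b, None => psi b tt
  | None, Some a => psis tt a
  | None, None => dcomp psis psi tt tt
  end.

Definition ext : Cat := Build_QCatRaw (option (cobj A)) ext_ty ext_hom.

Lemma ext_qcat : isQCat ext.
Proof.
  destruct HA as [Acomp Aid]; destruct Hpsi as [[psi_l psi_r] [[psis_l psis_r] [U C]]].
  assert (K1 : forall c a, psi c tt ∘ psis tt a <= chom A c a)
    by (intros; now apply dcomp_term_le).
  assert (K2 : forall c, psi c tt ∘ dcomp psis psi tt tt <= psi c tt).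
  { intro c; unfold dcomp; rewrite qcomp_fsup_l; apply fsup_least; intro b.
    rewrite qcomp_assoc, K1; apply psi_l. }
  split.
  - intros [a|] [b|] [c|]; simpl.
    + apply Acomp.
    + apply psis_r.
    + apply K1.
    + unfold dcomp; rewrite qcomp_fsup_r; apply fsup_least; intro b.
      rewrite <- qcomp_assoc, K1; apply psis_r.
    + apply psi_l.
    + apply (fsup_ub (fun u => psis tt u ∘ psi u tt)).
    + apply K2.
    + change (fsup (fun b => psis tt b ∘ psi b tt) ∘ dcomp psis psi tt tt
              <= dcomp psis psi tt tt).
      rewrite qcomp_fsup_r; apply fsup_least; intro b.
      rewrite <- qcomp_assoc, K2; apply (fsup_ub (fun u => psis tt u ∘ psi u tt)).
  - intros [a|]; [apply Aid | apply (U tt tt)].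
Qed.

Definition ext_incl : QFun A ext := Build_QFun (A := A) (B := ext) Some (fun a => eq_refl).
Definition ext_point : QFun (star X) ext :=
  Build_QFun (A := star X) (B := ext) (fun _ => None) (fun _ => eq_refl).
Definition ext_restr : Dist ext A := fun a z => chom ext (Some a) z.

Lemma ext_incl_functor : isFunctor ext_incl.
Proof. intros y x; reflexivity. Qed.

Lemma ext_point_functor : isFunctor ext_point.
Proof. destruct Hpsi as [_ [_ [U _]]]; intros [] []; exact (U tt tt). Qed.

Lemma ext_restr_point : dcomp ext_restr (rep ext_point) = psi.
Proof.
  apply dist_ext; intros a [].
  exact (f_equal (fun F : Dist ext ext => F (Some a) None) (did_idem ext ext_qcat)).
Qed.

Lemma ext_restr_incl : dcomp ext_restr (rep ext_incl) = did A.
Proof.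
  apply dist_ext; intros a a'.
  exact (f_equal (fun F : Dist ext ext => F (Some a) (Some a')) (did_idem ext ext_qcat)).
Qed.

Lemma ext_incl_restr : dcomp (rep ext_incl) ext_restr = did ext.
Proof.
  destruct ext_qcat as [Ecomp _]; destruct HA as [_ Aid].
  apply dist_ext; intros z z'; apply qle_antisym.
  - apply fsup_least; intro a; exact (Ecomp z' (Some a) z).
  - destruct z as [b|], z' as [b'|]; simpl.
    + apply (le_fsup _ b), qid_le_comp_l, Aid.
    + apply (le_fsup _ b), qid_le_comp_l, Aid.
    + apply (le_fsup _ b'), qid_le_comp_r, Aid.
    + reflexivity.
Qed.

Lemma ext_restr_left_adj : isLeftAdjWith ext A ext_restr (rep ext_incl).
Proof.
  pose proof (rep_left_adj ext_incl ext_qcat ext_incl_functor) as [D [D' _]].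
  split; [exact D'|]; split; [exact D|].
  rewrite ext_incl_restr, ext_restr_incl; split; reflexivity.
Qed.

Definition sym_ext_restr : Dist (sym ext) (sym A) := fun a z => chom (sym ext) (Some a) z.

Lemma sym_ext_restr_dist : isDist (sym ext) (sym A) sym_ext_restr.
Proof.
  destruct (sym_qcat ext ext_qcat) as [Ecomp _].
  split; intros; [exact (Ecomp x (Some y) (Some y')) | exact (Ecomp x' x (Some y))].
Qed.

Lemma sym_ext_restr_incl : dcomp sym_ext_restr (rep (symF ext_incl)) = did (sym A).
Proof.
  apply dist_ext; intros a a'.
  exact (f_equal (fun F : Dist (sym ext) (sym ext) => F (Some a) (Some a'))
                 (did_idem (sym ext) (sym_qcat ext ext_qcat))).
Qed.

Lemma sym_ext_restr_point : dcomp sym_ext_restr (rep (symF ext_point)) = dsymW psi psis.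
Proof.
  apply dist_ext; intros a [].
  exact (f_equal (fun F : Dist (sym ext) (sym ext) => F (Some a) None)
                 (did_idem (sym ext) (sym_qcat ext ext_qcat))).
Qed.

Local Notation DistPair := (fun p : Cat * Cat => Dist (fst p) (snd p)).

(* G sends the restriction ext -> A to a right inverse of the symmetrised inclusion, which
   must be the symmetrised restriction; hence G psi is forced to be psi_s. *)
Lemma dsymW_sym_left_adj_of_image (GA GE GX : Cat)
  (eA : GA = sym A) (eE : GE = sym ext) (eX : GX = sym (star X))
  (Gincl : Dist GA GE) (Grestr : Dist GE GA) (Gpoint : Dist GX GE) (Gpsi : Dist GX GA) :
  existT DistPair (GA, GE) Gincl = existT DistPair (sym A, sym ext) (rep (symF ext_incl)) ->
  existT DistPair (GX, GE) Gpoint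
  = existT DistPair (sym (star X), sym ext) (rep (symF ext_point)) ->
  dcomp Gincl Grestr = did GE -> Gpsi = dcomp Grestr Gpoint ->
  isDist GE GA Grestr -> isSymLeftAdj GX GA Gpsi ->
  isSymLeftAdj (star X) (sym A) (dsymW psi psis).
Proof.
  intros Eincl Epoint inv Epsi DG SG; subst GA GE GX.
  apply inj_pair2 in Eincl, Epoint; subst Gincl Gpoint.
  rewrite (left_inverse_eq_right_inverse _ _ _ (sym_qcat A HA) (sym_qcat ext ext_qcat)
             sym_ext_restr_dist DG sym_ext_restr_incl inv), sym_ext_restr_point in Epsi.
  subst Gpsi; apply left_adj_of_sym; [apply star_isSym | exact SG].
Qed.

End Extension.

Lemma cond4_cond2 : Cond4 Q -> Cond2 Q.
Proof.
  intros [G0 [G1 [[_ [G_sla [G_id [G_comp _]]]] [G0_sym G1_rep]]]] A HA X psi psis Hpsi.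
  pose proof (ext_qcat A HA X psi psis Hpsi) as HE.
  pose proof (ext_restr_left_adj A HA X psi psis Hpsi) as restr_la.
  pose proof (rep_left_adj _ HE (ext_incl_functor A X psi psis)) as incl_la.
  pose proof (rep_left_adj _ HE (ext_point_functor A X psi psis Hpsi)) as point_la.
  apply (dsymW_sym_left_adj_of_image A HA X psi psis Hpsi _ _ _
           (G0_sym A HA) (G0_sym _ HE) (G0_sym _ (star_qcat X))
           (G1 _ _ (rep (ext_incl A X psi psis))) (G1 _ _ (ext_restr A X psi psis))
           (G1 _ _ (rep (ext_point A X psi psis))) (G1 _ _ psi)).
  - exact (G1_rep _ _ _ HA HE (ext_incl_functor A X psi psis)).
  - exact (G1_rep _ _ _ (star_qcat X) HE (ext_point_functor A X psi psis Hpsi)).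
  - apply dist_ext; intros y x.
    rewrite <- (G_comp _ _ _ _ _ HE HA HE (ex_intro _ _ restr_la) (ex_intro _ _ incl_la)).
    rewrite (ext_incl_restr A HA X psi psis Hpsi); exact (G_id _ HE y x).
  - transitivity (G1 _ _ (dcomp (ext_restr A X psi psis) (rep (ext_point A X psi psis)))).
    + now rewrite ext_restr_point.
    + apply dist_ext, G_comp; auto using star_qcat; eexists; eauto.
  - exact (proj1 (G_sla _ _ _ HE HA (ex_intro _ _ restr_la))).
  - exact (G_sla _ _ psi (star_qcat X) HA (ex_intro _ _ Hpsi)).
Qed.

End Condition4.

Theorem theorem3p7 (Q : Quantaloid) :
  (Cond1 Q <-> Cond2 Q) /\ (Cond2 Q <-> Cond3 Q) /\ (Cond3 Q <-> Cond4 Q) /\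
  (Cond4 Q <-> Cond5 Q) /\
  (Cond1 Q /\ Cond2 Q /\ Cond3 Q /\ Cond4 Q /\ Cond5 Q ->
     IsRightAdjInc Q (@sym Q) (@dsym Q) /\ CommutesWithR Q (@sym Q) (@dsym Q)).
Proof.
  assert (c2_c3 : Cond2 Q -> Cond3 Q) by (intro; now apply cond5_cond3, cond2_cond5).
  split; [split; [exact cond1_cond2 | exact cond2_cond1]|].
  split; [split; [exact c2_c3 | exact cond3_cond2]|].
  split; [split; [exact cond3_cond4 | intro; now apply c2_c3, cond4_cond2]|].
  split; [split; [intro; now apply cond2_cond5, cond4_cond2
                 | intro; now apply cond3_cond4, cond5_cond3]|].
  intros [_ [_ [H3 _]]]; split; [now apply cond3_right_adjoint | apply commutes_with_R].
Qed.
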